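(* Let $a,b\in\mathbb{Q}_3$ with $\gamma(a)=\gamma(b)=-m<0$ ($m>0$). Then $x=\sum_{k\ge0}x_k3^k\in\mathbb{Z}_3^*$ is a solution of $x^3+ax=b$ if and only if the congruences $$a_0x_0\equiv b_0\pmod 3,$$ $$x_ka_0+x_{k-1}a_1+\dots+x_0a_k+M_k(x_0,\dots,x_{k-1})\equiv b_k\pmod3,\quad 1\le k\le m-1,$$ $$x_ma_0+x_{m-1}a_1+\dots+x_0a_m+x_0^3+M_m(x_0,\dots,x_{m-1})\equiv b_m\pmod3,$$ $$x_{m+1}a_0+x_ma_1+\dots+x_0a_{m+1}+M_{m+1}(x_0,\dots,x_m)\equiv b_{m+1}\pmod3,$$ $$x_ka_0+x_{k-1}a_1+\dots+x_0a_k+x_0^2x_{k-m-1}+N_{k-m}(x_0,\dots,x_{k-m-1})+M_k(x_0,\dots,x_{k-1})\equiv b_k\pmod3,\quad k\ge m+2,$$ are fulfilled, where the integers $M_k(x_0,\dots,x_{k-1})$ are defined successively by $$a_0x_0=b_0+3M_1(x_0),$$ $$x_ka_0+\dots+x_0a_k=b_k-M_k(x_0,\dots,x_{k-1})+3M_{k+1}(x_0,\dots,x_k),\quad1\le k\le m-1,$$ $$x_ma_0+\dots+x_0a_m+x_0^3=b_m-M_m(x_0,\dots,x_{m-1})+3M_{m+1}(x_0,\dots,x_m),$$ $$x_{m+1}a_0+\dots+x_0a_{m+1}=b_{m+1}-M_{m+1}(x_0,\dots,x_m)+3M_{m+2}(x_0,\dots,x_{m+1}),$$ $$x_ka_0+\dots+x_0a_k+x_0^2x_{k-m-1}+N_{k-m}(x_0,\dots,x_{k-m-1})=b_k-M_k(x_0,\dots,x_{k-1})+3M_{k+1}(x_0,\dots,x_k),\quad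 k\ge m+2.$$
   Context: Write $a=3^{\gamma(a)}(a_0+a_13+a_23^2+\dots)$, $b=3^{\gamma(b)}(b_0+b_13+b_23^2+\dots)$ in canonical form, with digits $a_j,b_j\in\{0,1,2\}$, $a_0,b_0\ne0$, $\gamma(a),\gamma(b)\in\mathbb{Z}$. $\mathbb{Z}_3^*$ is the set of $3$-adic units; $x\in\mathbb{Z}_3^*$ is written $x=x_0+x_13+x_23^2+\dots$ with $x_j\in\{0,1,2\}$, $x_0\ne0$. For $k\ge1$, $N_k(x_0,\dots,x_{k-1})=\sum \frac{3!}{m_0!\cdots m_{k-1}!}x_0^{m_0}\cdots x_{k-1}^{m_{k-1}}$, the sum over nonnegative integers $m_0,\dots,m_{k-1}$ with $\sum_{i=0}^{k-1}m_i=3$ and $\sum_{i=1}^{k-1}im_i=k$; in particular $N_1=0$. *)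

From HB Require Import structures.
From mathcomp Require Import all_boot all_order all_algebra.
Set Implicit Arguments. Unset Strict Implicit. Unset Printing Implicit Defensive.
Import Order.TTheory GRing.Theory Num.Theory.
Local Open Scope ring_scope.

(* A 3-adic digit sequence d_0 + d_1 3 + d_2 3^2 + ... *)
Definition digits := nat -> nat.

Definition trunc3 (d : digits) (n : nat) : int :=
  \sum_(i < n) (d i)%:Z * (3 : int) ^+ i.

(* A nonzero element of Q_3 in canonical form 3^gam (d_0 + d_1 3 + ...). *)
Record Q3c := mkQ3c { gam : int; dig : digits }.

Definition canonical_Q3 (a : Q3c) : Prop :=
  (forall j, (dig a j < 3)%N) /\ dig a 0 <> 0%N.

Definition Z3_unit (x : digits) : Prop :=
  (forall j, (x j < 3)%N) /\ x 0 <> 0%N.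

(* "x^3 + a x = b holds in Q_3", for x in Z_3 and a, b in Q_3 in canonical form.
   We multiply through by 3^(-c), c = min(0, gam a, gam b), obtaining an identity
   in Z_3 = lim Z/3^n Z, i.e. a congruence modulo 3^n of truncations for all n. *)
Definition Q3_cubic_eq (a b : Q3c) (x : digits) : Prop :=
  let c := Num.min 0 (Num.min (gam a) (gam b)) in
  forall n : nat,
    ((3 : int) ^+ n %|
       (3 : int) ^+ `|- c|%N * (trunc3 x n) ^+ 3
     + (3 : int) ^+ `|gam a - c|%N * trunc3 (dig a) n * trunc3 x n
     - (3 : int) ^+ `|gam b - c|%N * trunc3 (dig b) n)%Z.

(* N_k(x_0,...,x_(k-1)) = sum over (m_0,...,m_(k-1)) with sum m_i = 3 and
   sum i m_i = k of 3!/(m_0!...m_(k-1)!) x_0^m_0 ... x_(k-1)^m_(k-1).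
   (Each m_i <= 3, so ranging over 'I_4 loses nothing.) *)
Definition Npoly (k : nat) (x : digits) : int :=
  (\sum_(mm : {ffun 'I_k -> 'I_4} |
         ((\sum_(i < k) (mm i : nat)) == 3)%N &&
         ((\sum_(i < k) (i : nat) * (mm i : nat)) == k)%N)
      ((3`! %/ \prod_(i < k) (mm i : nat)`!)
        * \prod_(i < k) (x i) ^ (mm i : nat))%N)%:Z.

Definition conv (x a : digits) (k : nat) : int :=
  \sum_(i < k.+1) (x (k - i)%N)%:Z * (a i)%:Z.

(* The part of the k-th congruence other than M_k and b_k. *)
Definition Tterm (m : nat) (a x : digits) (k : nat) : int :=
  conv x a k
  + (if k == m then (x 0%N)%:Z ^+ 3 else 0)
  + (if (m.+2 <= k)%N
     then (x 0%N)%:Z ^+ 2 * (x (k - m.+1)%N)%:Z + Npoly (k - m)%N x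
     else 0).

(* M_0 = 0 and T_k = b_k - M_k + 3 M_(k+1) (M_(k+1) is an integer exactly when
   the k-th congruence holds; otherwise floor division is used). *)
Fixpoint Mseq (m : nat) (a b x : digits) (k : nat) : int :=
  match k with
  | 0%N => 0
  | k'.+1 => ((Tterm m a x k' - (b k')%:Z + Mseq m a b x k') %/ 3)%Z
  end.

Definition congr_k (m : nat) (a b x : digits) (k : nat) : Prop :=
  (3 %| Tterm m a x k + Mseq m a b x k - (b k)%:Z)%Z.

From HB Require Import structures.
From mathcomp Require Import all_boot all_order all_algebra.
From mathcomp Require Import ring zify.
Set Implicit Arguments. Unset Strict Implicit. Unset Printing Implicit Defensive.
Import Order.TTheory GRing.Theory Num.Theory.
Local Open Scope ring_scope.

(* With P = x_0 + x_1 X + ... + x_(n-1) X^(n-1) and likewise P_a, P_b, the integer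
   3^m P(3)^3 + P_a(3) P(3) - P_b(3) is the value at 3 of an integer polynomial, and
   modulo 3^n that value only depends on the coefficients of degree < n.  By the
   multinomial theorem the coefficient of X^w in P^3 is x_0^3 for w = 0 and
   3 x_0^2 x_w + N_w otherwise.  Adding the multiple (X - 3) x_0^2 (P - x_0) of X - 3
   moves every 3 x_0^2 x_w one degree up as x_0^2 x_w, and then the coefficients of
   degree k < n are exactly T_k - b_k, the paper's congruences without carries.  So
   the equation holds iff 3^n divides sum_(k<n) (T_k - b_k) 3^k for all n, and
   propagating the carries M_k digit by digit makes this the system of congruences. *)

Section Multinomial.

Variable t : nat.
Local Notation expvec k := {ffun 'I_k -> 'I_t.+1}.

Definition mdeg k (mm : expvec k) : nat := (\sum_(i < k) mm i)%N.
Definition mweight k (mm : expvec k) : nat := (\sum_(i < k) i * mm i)%N.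
Definition multinomial k (mm : expvec k) : nat :=
  ((mdeg mm)`! %/ \prod_(i < k) (mm i)`!)%N.

Definition expvec_ext k (c : 'I_t.+1) (f : expvec k) : expvec k.+1 :=
  [ffun i => if unlift ord_max i is Some j then f j else c].

Lemma expvec_ext_max k c (f : expvec k) : expvec_ext c f ord_max = c.
Proof. by rewrite /expvec_ext ffunE unlift_none. Qed.

Lemma expvec_ext_widen k c (f : expvec k) (j : 'I_k) :
  expvec_ext c f (widen_ord (leqnSn k) j) = f j.
Proof.
have -> : widen_ord (leqnSn k) j = lift ord_max j.
  by apply: val_inj; rewrite /= /bump leqNgt ltn_ord.
by rewrite /expvec_ext ffunE liftK.
Qed.

Lemma expvec_ext_bij k :
  bijective (fun p : 'I_t.+1 * expvec k => expvec_ext p.1 p.2).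
Proof.
exists (fun g : expvec k.+1 =>
  (g ord_max, [ffun j => g (widen_ord (leqnSn k) j)]) : 'I_t.+1 * expvec k).
  move=> [c f] /=; rewrite expvec_ext_max; congr pair.
  by apply/ffunP => j; rewrite ffunE expvec_ext_widen.
move=> g; apply/ffunP => i; rewrite /expvec_ext ffunE.
case: (unliftP ord_max i) => [j ->|->] /=; last by [].
by rewrite ffunE; congr (g _); apply: val_inj; rewrite /= /bump leqNgt ltn_ord.
Qed.

Lemma mdeg_ext k c (f : expvec k) : mdeg (expvec_ext c f) = (mdeg f + c)%N.
Proof.
by rewrite /mdeg big_ord_recr expvec_ext_max; under eq_bigr do rewrite expvec_ext_widen.
Qed.

Lemma mweight_ext k c (f : expvec k) : mweight (expvec_ext c f) = (mweight f + k * c)%N.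
Proof.
by rewrite /mweight big_ord_recr expvec_ext_max; under eq_bigr do rewrite expvec_ext_widen.
Qed.

Lemma prod_fact_dvd k (g : 'I_k -> nat) :
  (\prod_(i < k) (g i)`! %| (\sum_(i < k) g i)`!)%N.
Proof.
elim: k g => [|k IH] g; first by rewrite !big_ord0.
rewrite !big_ord_recr /= -(bin_fact (leq_addl _ (g ord_max))) addnK mulnA mulnC.
by rewrite -mulnA; apply/dvdn_mull/dvdn_mul/IH.
Qed.

Lemma multinomial_ext k c (f : expvec k) :
  multinomial (expvec_ext c f) = ('C(mdeg f + c, c) * multinomial f)%N.
Proof.
rewrite /multinomial mdeg_ext big_ord_recr expvec_ext_max /=.
under eq_bigr do rewrite expvec_ext_widen.
set P := (\prod_(i < k) _)%N.
have /divnK defF : (P %| (mdeg f)`!)%N by apply: prod_fact_dvd.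
rewrite -(bin_fact (leq_addl (mdeg f) c)) addnK -{1}defF.
set q := ((mdeg f)`! %/ P)%N.
rewrite [(_ * _)%N](_ : _ = 'C(mdeg f + c, c) * q * (P * c`!))%N; last by ring.
by rewrite mulnK // muln_gt0 fact_gt0 prodn_gt0 // => i; apply: fact_gt0.
Qed.

Variables (R : comNzRingType) (d : nat -> R).

Definition mterm k (mm : expvec k) : {poly R} :=
  ((multinomial mm)%:R * \prod_(i < k) d i ^+ mm i)%:P * 'X^(mweight mm).

Lemma multinomial_expansion k s : (s <= t)%N ->
  (\sum_(i < k) (d i)%:P * 'X^i) ^+ s =
  \sum_(mm : expvec k | mdeg mm == s) mterm mm.
Proof.
elim: k s => [|k IH] s le_st.
  rewrite big_ord0 expr0n; case: s le_st => [|s] _ /=.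
    rewrite (big_pred1 [ffun => ord0]) => [|mm]; last first.
      by rewrite /mdeg big_ord0 eqxx; apply/esym/eqP/ffunP => -[].
    by rewrite /mterm /multinomial /mweight /mdeg !big_ord0 /= mulr1 expr0 mulr1.
  by apply/esym/big_pred0 => mm; rewrite /mdeg big_ord0.
rewrite big_ord_recr /= exprDn; set S := \sum_(i < k) _.
rewrite (reindex _ (onW_bij _ (expvec_ext_bij k))) /= [RHS]big_mkcond.
rewrite -(pair_bigA _ (fun c f => let g := expvec_ext c f in
                                  if mdeg g == s then mterm g else 0)) /=.
rewrite (big_ord_widen _ (fun c => S ^+ (s - c) * ((d k)%:P * 'X^k) ^+ c *+ 'C(s, c))
                       (le_st : (s.+1 <= t.+1)%N)).
rewrite big_mkcond /=; apply: eq_bigr => c _.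
case: ltnP => [le_cs|lt_sc]; last first.
  by rewrite big1 // => f _; rewrite mdeg_ext ifN_eq //; apply/eqP; lia.
rewrite IH ?(leq_trans (leq_subr _ _)) // big_distrl -sumrMnl big_mkcond /=.
apply: eq_bigr => f _.
have -> : (mdeg (expvec_ext c f) == s) = (mdeg f == s - c)%N.
  by rewrite mdeg_ext -[in RHS](eqn_add2r c) subnK.
case: eqP => [deg_f|]; last by [].
rewrite /mterm mweight_ext multinomial_ext deg_f subnK // big_ord_recr /= expvec_ext_max.
under [in RHS]eq_bigr do rewrite expvec_ext_widen.
rewrite exprD exprM natrM !polyCM !polyC_natr exprMn (rmorphXn (@polyC R)); ring.
Qed.

End Multinomial.

Lemma coef_exprDXn (R : comNzRingType) (p r : {poly R}) n s w : (w < n)%N ->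
  ((p + 'X^n * r) ^+ s)`_w = (p ^+ s)`_w.
Proof.
move=> lt_wn.
have [q ->] : exists q, (p + 'X^n * r) ^+ s = p ^+ s + 'X^n * q.
  elim: s => [|s [q IH]]; first by exists 0; rewrite mulr0 addr0.
  by exists (q * p + p ^+ s * r + 'X^n * q * r); rewrite !exprSr IH; ring.
by rewrite coefD coefXnM lt_wn addr0.
Qed.

Section TruncatedSeries.

Variables (R : comNzRingType) (d : nat -> R).

Definition trunc_poly n : {poly R} := \sum_(i < n) (d i)%:P * 'X^i.

Lemma trunc_polyS n : trunc_poly n.+1 = trunc_poly n + (d n)%:P * 'X^n.
Proof. by rewrite /trunc_poly big_ord_recr. Qed.

Lemma coef_trunc_poly n i : (trunc_poly n)`_i = if (i < n)%N then d i else 0.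
Proof.
elim: n => [|n IH]; first by rewrite /trunc_poly big_ord0 coef0.
rewrite trunc_polyS coefD IH coefCM coefXn ltnS.
by case: (ltngtP i n) => [||->]; rewrite /= ?mulr0 ?addr0 ?mulr1 ?add0r.
Qed.

Lemma horner_trunc_poly n c : (trunc_poly n).[c] = \sum_(i < n) d i * c ^+ i.
Proof.
by rewrite /trunc_poly horner_sum; apply: eq_bigr => i _; rewrite hornerCM hornerXn.
Qed.

Lemma trunc_poly_widen n j : exists r, trunc_poly (n + j) = trunc_poly n + 'X^n * r.
Proof.
elim: j => [|j [r IH]]; first by exists 0; rewrite addn0 mulr0 addr0.
exists (r + (d (n + j))%:P * 'X^j).
by rewrite addnS trunc_polyS IH exprD; ring.
Qed.

Lemma coef_exp_trunc_poly_widen n n' s w : (w < n)%N -> (n <= n')%N ->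
  (trunc_poly n' ^+ s)`_w = (trunc_poly n ^+ s)`_w.
Proof.
move=> lt_wn /subnKC <-; have [r ->] := trunc_poly_widen n (n' - n).
exact: coef_exprDXn.
Qed.

Lemma coef_cube_trunc_poly n w : (w < n)%N ->
  (trunc_poly n ^+ 3)`_w =
  if w == 0%N then d 0 ^+ 3 else 3%:R * d 0 ^+ 2 * d w + (trunc_poly w ^+ 3)`_w.
Proof.
move=> lt_wn; rewrite (@coef_exp_trunc_poly_widen w.+1) // trunc_polyS.
case: w {lt_wn} => [|w] /=.
  by rewrite /trunc_poly big_ord0 add0r mulr1 -rmorphXn coefC.
set P := trunc_poly w.+1; set c := d w.+1.
have -> : (P + c%:P * 'X^(w.+1)) ^+ 3 = P ^+ 3 + 'X^(w.+1) * ((3%:R * c)%:P * (P * P)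
    + 'X^(w.+1) * ((3%:R * c ^+ 2)%:P * P + (c ^+ 3)%:P * 'X^(w.+1))).
  by rewrite !polyCM polyC_natr; ring.
rewrite coefD coefXnM ltnn subnn coefD coefCM coefXnM /= addr0 !coef0M coef_trunc_poly /=.
by rewrite addrC; congr (_ + _); ring.
Qed.

End TruncatedSeries.

Lemma coef_mul_trunc_poly (R : comNzRingType) (d e : nat -> R) n k : (k < n)%N ->
  (trunc_poly d n * trunc_poly e n)`_k = \sum_(i < k.+1) d i * e (k - i)%N.
Proof.
move=> lt_kn; rewrite coefM; apply: eq_bigr => i _.
have le_ik : (i <= k)%N by rewrite -ltnS.
by rewrite !coef_trunc_poly (leq_ltn_trans le_ik) // (leq_ltn_trans (leq_subr i k)).
Qed.

Lemma horner_sub_trunc_dvdz (p : {poly int}) (c : int) n :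
  (c ^+ n %| p.[c] - \sum_(k < n) p`_k * c ^+ k)%Z.
Proof.
rewrite (horner_coef_wide c (leq_maxr n (size p))).
rewrite (big_ord_widen _ (fun k => p`_k * c ^+ k) (leq_maxl n (size p))).
rewrite (bigID (fun k : 'I__ => (k < n)%N)) /= addrAC subrr add0r.
by apply: rpred_sum => k; rewrite -leqNgt => le_nk; apply/dvdz_mull/dvdz_exp2l.
Qed.

Section Carries.

Variables (c : int) (u : nat -> int).

Fixpoint carry k : int :=
  if k is k'.+1 then ((u k' + carry k') %/ c)%Z else 0.

Lemma sum_digits_carry n : (forall k, (k < n)%N -> (c %| u k + carry k)%Z) ->
  \sum_(k < n) u k * c ^+ k = c ^+ n * carry n.
Proof.
elim: n => [|n IH] dvd_c; first by rewrite big_ord0 mul1r.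
rewrite big_ord_recr /= IH => [|k lt_kn]; last by apply: dvd_c; apply: ltnW.
by rewrite exprSr -mulrA [c * _]mulrC divzK ?dvd_c //; ring.
Qed.

Hypothesis c_neq0 : c != 0.

Lemma carry_dvdP :
  (forall k, (c %| u k + carry k)%Z) <->
  (forall n, (c ^+ n %| \sum_(k < n) u k * c ^+ k)%Z).
Proof.
split=> [dvd_c n|dvd_sum].
  by rewrite (sum_digits_carry (fun k _ => dvd_c k)) dvdz_mulr.
suff dvd_lt n k : (k < n)%N -> (c %| u k + carry k)%Z.
  by move=> k; apply: (dvd_lt k.+1).
elim: n k => [//|n IH] k; rewrite ltnS leq_eqVlt => /orP[/eqP ->|]; last exact: IH.
have := dvd_sum n.+1; rewrite big_ord_recr /= (sum_digits_carry IH).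
by rewrite [u n * _]mulrC -mulrDr addrC exprSr dvdz_mul2l // expf_neq0.
Qed.

End Carries.

Local Notation digit_poly d n := (trunc_poly (fun i => (d i)%:Z) n).

Lemma horner_digit_poly d n : (digit_poly d n).[3] = trunc3 d n.
Proof. by rewrite horner_trunc_poly. Qed.

Lemma Npoly_coef k x : Npoly k x = (digit_poly x k ^+ 3)`_k.
Proof.
rewrite (multinomial_expansion _ _ (leqnn 3)) coef_sum /Npoly -natz natr_sum.
rewrite big_mkcondr /=; apply: eq_bigr => mm /eqP deg3.
rewrite /mterm coefCM coefXn eq_sym; case: eqP => _; last by rewrite mulr0.
rewrite mulr1 natrM natr_prod /multinomial [mdeg mm]deg3.
by congr (_ * _); apply: eq_bigr => i _; rewrite natrX natz.
Qed.

Lemma Npoly1 x : Npoly 1 x = 0.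
Proof.
by rewrite Npoly_coef /trunc_poly big_ord1 expr0 mulr1 -(rmorphXn (@polyC int)) coefC.
Qed.

Definition carried_cube (x : digits) n : {poly int} :=
  digit_poly x n ^+ 3 + ('X - 3%:P) * (((x 0%N)%:Z ^+ 2)%:P * (digit_poly x n - (x 0%N)%:Z%:P)).

Lemma coef_carried_cube x n j : (j < n)%N ->
  (carried_cube x n)`_j =
    (if j == 0%N then (x 0%N)%:Z ^+ 3 else 0)
  + (if (2 <= j)%N then (x 0%N)%:Z ^+ 2 * (x j.-1)%:Z + Npoly j x else 0).
Proof.
move=> lt_jn; have coef_carry i : (i < n)%N ->
    (((x 0%N)%:Z ^+ 2)%:P * (digit_poly x n - (x 0%N)%:Z%:P))`_i =
    if i == 0%N then 0 else (x 0%N)%:Z ^+ 2 * (x i)%:Z.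
  move=> lt_in; rewrite coefCM coefB coef_trunc_poly lt_in coefC.
  by case: eqP => [->|]; rewrite ?subrr ?mulr0 ?subr0.
rewrite /carried_cube coefD coef_cube_trunc_poly // -Npoly_coef mulrBl coefB.
rewrite coefXM [X in _ - X]coefCM !coef_carry ?(leq_ltn_trans (leq_pred j)) //.
case: j lt_jn => [|[|j]] _ /=; rewrite ?Npoly1; ring.
Qed.

Definition cubic_poly m (a b x : digits) n : {poly int} :=
  'X^m * carried_cube x n + digit_poly a n * digit_poly x n - digit_poly b n.

Lemma horner_cubic_poly m a b x n :
  (cubic_poly m a b x n).[3] =
  3 ^+ m * trunc3 x n ^+ 3 + trunc3 a n * trunc3 x n - trunc3 b n.
Proof. by rewrite /cubic_poly /carried_cube !hornerE !horner_digit_poly. Qed.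

Lemma coef_Xn_carried_cube m x n k : (k < n)%N ->
  ('X^m * carried_cube x n)`_k =
    (if k == m then (x 0%N)%:Z ^+ 3 else 0)
  + (if (m.+2 <= k)%N
     then (x 0%N)%:Z ^+ 2 * (x (k - m.+1)%N)%:Z + Npoly (k - m) x else 0).
Proof.
move=> lt_kn; rewrite coefXnM; case: ltnP => [lt_km|le_mk].
  by rewrite ltn_eqF // ifN // -ltnNge ltnW // ltnW.
rewrite coef_carried_cube ?(leq_ltn_trans (leq_subr m k)) //.
by rewrite subn_eq0 eqn_leq le_mk andbT leq_subRL // addn2 -subnS.
Qed.

Lemma coef_cubic_poly m a b x n k : (k < n)%N ->
  (cubic_poly m a b x n)`_k = Tterm m a x k - (b k)%:Z.
Proof.
move=> lt_kn; rewrite coefB coefD coef_Xn_carried_cube // coef_mul_trunc_poly //.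
rewrite coef_trunc_poly lt_kn /Tterm /conv; under [in RHS]eq_bigr do rewrite mulrC.
ring.
Qed.

Lemma Mseq_carry m a b x k :
  Mseq m a b x k = carry 3 (fun k => Tterm m a x k - (b k)%:Z) k.
Proof. by elim: k => //= k ->. Qed.

Lemma congr_all_dvdP m a b x :
  (forall k, congr_k m a b x k) <->
  (forall n, (3 ^+ n %| \sum_(k < n) (Tterm m a x k - (b k)%:Z) * 3 ^+ k)%Z).
Proof.
rewrite -(@carry_dvdP 3 (fun k => Tterm m a x k - (b k)%:Z)) //.
by split=> dvd3 k; have := dvd3 k; rewrite /congr_k Mseq_carry addrAC.
Qed.

Theorem theorem3p3 (m : nat) (a b : Q3c) (x : digits) :
  (0 < m)%N ->
  canonical_Q3 a -> canonical_Q3 b ->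
  gam a = - (m%:Z) -> gam b = - (m%:Z) ->
  Z3_unit x ->
  (Q3_cubic_eq a b x <-> forall k : nat, congr_k m (dig a) (dig b) x k).
Proof.
move=> _ _ _ gam_a gam_b _; rewrite congr_all_dvdP /Q3_cubic_eq gam_a gam_b minxx.
rewrite min_r ?oppr_le0 // subrr opprK /=.
have sum_coef n : \sum_(k < n) (cubic_poly m (dig a) (dig b) x n)`_k * 3 ^+ k =
    \sum_(k < n) (Tterm m (dig a) x k - (dig b k)%:Z) * 3 ^+ k.
  by apply: eq_bigr => k _; rewrite coef_cubic_poly.
split=> dvd3 n; have := horner_sub_trunc_dvdz (cubic_poly m (dig a) (dig b) x n) 3 n;
  move: (dvd3 n); rewrite horner_cubic_poly sum_coef expr0 !mul1r => dvd_lhs dvd_rhs.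
  by rewrite rpredBl in dvd_rhs.
by rewrite rpredBr in dvd_rhs.
Qed.
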